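(* Let $n\ge 2$. The fan $F_n$ admits an $(a,d)$-distance antimagic labeling for some integers $a$ and $d\ge 0$ if and only if $n=2$ or $n=4$.
   Context: The fan $F_n$ is obtained from a path $x_1x_2\cdots x_n$ by adding a center vertex $x_0$ adjacent to all of $x_1,\dots,x_n$; it has $n+1$ vertices. For a graph $G=(V,E)$ with $v=|V|$ and a bijection $f:V\to\{1,\dots,v\}$, the vertex-weight of $x$ is $w(x)=\sum_{y\in N(x)}f(y)$ with $N(x)$ the set of neighbours of $x$. For integers $a$ and $d\ge0$, $f$ is an $(a,d)$-distance antimagic labeling if the multiset of vertex-weights equals $\{a,a+d,\dots,a+(v-1)d\}$ (for $d=0$: all weights equal). *)

From mathcomp Require Import all_boot all_order all_algebra all_fingroup.
Set Implicit Arguments. Unset Strict Implicit. Unset Printing Implicit Defensive.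
Import GRing.Theory Num.Theory.

(* Fan F_n on vertex set 'I_n.+1: vertex 0 is the centre x_0,
   vertex i (1 <= i <= n) is the path vertex x_i. *)
Definition fan_adj (n : nat) : rel 'I_n.+1 :=
  fun x y =>
    [|| (val x == 0) && (val y != 0),
        (val y == 0) && (val x != 0)
      | [&& val x != 0, val y != 0 & ((val x == (val y).+1) || (val y == (val x).+1))]].

(* A bijection f : V -> {1,...,v} is encoded as a permutation s of 'I_n.+1
   with f x = s x + 1. *)
Arguments fan_adj : clear implicits.

Definition label {n : nat} (s : {perm 'I_n.+1}) (x : 'I_n.+1) : nat := (s x).+1.

Definition vweight {n : nat} (s : {perm 'I_n.+1}) (x : 'I_n.+1) : nat :=
  \sum_(y : 'I_n.+1 | fan_adj n x y) label s y.

Definition distance_antimagic {n : nat} (s : {perm 'I_n.+1}) (a : int) (d : nat) : Prop :=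
  perm_eq [seq Posz (vweight s x) | x : 'I_n.+1]
          [seq (a + Posz (i * d))%R | i <- iota 0 n.+1].

From mathcomp Require Import all_boot all_order all_algebra all_fingroup.
From mathcomp Require Import zify.

Set Implicit Arguments.
Unset Strict Implicit.
Unset Printing Implicit Defensive.

(* Write f(x_0), ..., f(x_n) for the labels of the fan F_n, a permutation of
   1, ..., n+1.  The hub x_0 is adjacent to every path vertex, so its weight is
   S - f(x_0) with S = (n+1)(n+2)/2, while a path vertex x_i has weight
   f(x_0) + f(x_{i-1}) + f(x_{i+1}) <= 3(n+1).  For n >= 7 the hub weight is a
   huge outlier, which an arithmetic progression cannot accommodate: it must
   be the last term a + n d, the other n terms are path weights, so
   (n-1) d <= 3(n+1) - 1 while d >= (hub weight) - 3(n+1); this is impossible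
   (lemma [ap_outlier_gap] and [large_fans_not_ap]).  The cases n = 3, 5, 6
   are excluded by enumerating all labelings, and explicit labelings settle
   n = 2 and n = 4. *)

Definition ap (w d k : nat) : seq nat := [seq w + i * d | i <- iota 0 k].

Lemma mem_ap w d k x : (x \in ap w d k) = has (fun i => x == w + i * d) (iota 0 k).
Proof.
apply/mapP/hasP => [[i hi ->]|[i hi /eqP ->]]; by exists i.
Qed.

(* A progression of integers whose multiset of values consists of naturals
   starts at a natural number, so [distance_antimagic] can be read in nat. *)
Lemma int_ap_nat (W : seq nat) (d k : nat) :
  (exists a : int, perm_eq [seq Posz x | x <- W] [seq (a + Posz (i * d))%R | i <- iota 0 k.+1])
  <-> (exists w, perm_eq W (ap w d k.+1)).
Proof.
have natE w : [seq (Posz w + Posz (i * d))%R | i <- iota 0 k.+1] = map Posz (ap w d k.+1).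
  by rewrite -map_comp; apply: eq_map => i /=; rewrite PoszD.
split=> [[a hW]|[w hW]]; last by exists (Posz w); rewrite natE; apply: perm_map.
have : a \in [seq Posz x | x <- W].
  rewrite (perm_mem hW); apply/mapP; exists 0; first by rewrite mem_iota.
  by rewrite mul0n GRing.addr0.
case/mapP=> w _ ha; exists w; apply: (perm_map_inj (f := Posz)) => [x y []//|].
by rewrite -natE -ha.
Qed.

(* A boolean test for being a permuted progression, usable by computation:
   it searches W for the first two terms w and w + d of the progression. *)
Definition is_ap (W : seq nat) : bool :=
  has (fun w => has (fun w' => perm_eq W (ap w (w' - w) (size W))) W) W.

Lemma is_ap_of (W : seq nat) w d : 1 < size W -> perm_eq W (ap w d (size W)) -> is_ap W.
Proof.
move=> hsize hW; have memW i : i < size W -> w + i * d \in W.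
  by move=> hi; rewrite (perm_mem hW) mem_ap; apply/hasP; exists i; rewrite ?mem_iota.
apply/hasP; exists w; first by have := memW 0; rewrite mul0n addn0; apply; lia.
by apply/hasP; exists (w + d); [have := memW 1; rewrite mul1n; apply; lia | rewrite addKn].
Qed.

(* A progression of n + 1 positive terms with an outlier c > B, all other
   terms (of which there is at least one) being at most B: then c is the last
   term, so the common difference d is at least c - B, while the n-th term
   w + (n-1) d with w >= 1 is at most B. *)
Lemma ap_outlier_gap (W : seq nat) w d n c B :
  perm_eq W (ap w d n.+1) -> 0 < n -> 0 \notin W -> c \in W -> B < c ->
  (forall x, x \in W -> x != c -> x <= B) -> (exists2 x, x \in W & x != c) ->
  n.-1 * (c - B) < B.
Proof.
move=> hW n_gt0 W_pos cW Bc small [x0 x0W x0c].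
have memW i : i <= n -> w + i * d \in W.
  by move=> hi; rewrite (perm_mem hW) mem_ap; apply/hasP; exists i; rewrite ?mem_iota.
have [k kn ck] : exists2 k, k <= n & c = w + k * d.
  move: cW; rewrite (perm_mem hW) mem_ap => /hasP [k]; rewrite mem_iota => hk /eqP ->.
  by exists k => //; lia.
have top : c = w + n * d.
  apply/eqP; apply: contraT => hc; have := small _ (memW n (leqnn n)).
  rewrite eq_sym => /(_ hc); have := leq_mul kn (leqnn d); lia.
have d_gt0 : 0 < d.
  rewrite lt0n; apply: contra x0c => /eqP d0; move: x0W.
  rewrite (perm_mem hW) mem_ap top d0 => /hasP [i _ /eqP ->]; by rewrite !muln0.
have w_gt0 : 0 < w.
  by rewrite lt0n; apply: contraNneq W_pos => <-; have := memW 0 (leq0n n); rewrite mul0n addn0.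
have below : w + n.-1 * d <= B.
  apply: small; first by apply: memW; lia.
  by rewrite top; apply/eqP => /eqP; rewrite eqn_add2l eqn_mul2r; lia.
have gap : c - B <= d by move: below; rewrite top; case: (n) n_gt0 => // m _; rewrite mulSn; lia.
by apply: leq_ltn_trans (leq_mul (leqnn _) gap) _; lia.
Qed.

(* The weights of the fan F_n as a function of the sequence ls of labels
   f(x_0), ..., f(x_n): index 0 is the hub, index k > 0 the path vertex x_k. *)
Definition fan_weight (n : nat) (ls : seq nat) (k : nat) : nat :=
  if k == 0 then sumn ls - nth 0 ls 0
  else nth 0 ls 0 + (if 1 < k then nth 0 ls k.-1 else 0) + (if k < n then nth 0 ls k.+1 else 0).

Definition fan_weights (n : nat) (ls : seq nat) : seq nat :=
  [seq fan_weight n ls k | k <- iota 0 n.+1].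

Section LabeledFan.

Variables (n : nat) (s : {perm 'I_n.+1}).

Definition labels : seq nat := [seq label s x | x <- enum 'I_n.+1].

Lemma nth_labels k : k <= n -> nth 0 labels k = label s (inord k).
Proof.
move=> hk; rewrite (nth_map ord0) ?size_enum_ord //; congr label; apply: val_inj.
by rewrite /= nth_enum_ord // inordK.
Qed.

Lemma labelsE : labels = [seq label s (inord k) | k <- iota 0 n.+1].
Proof. by rewrite /labels -val_enum_ord -map_comp; apply: eq_map => x /=; rewrite inord_val. Qed.

Lemma sum_labels : \sum_(x < n.+1) label s x = sumn labels.
Proof. by rewrite sumnE big_map big_enum. Qed.

Lemma labels_perm : perm_eq labels (iota 1 n.+1).
Proof.
have -> : iota 1 n.+1 = [seq (val x).+1 | x <- enum 'I_n.+1].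
  by rewrite map_comp val_enum_ord -(iotaDl 1 0) add1n.
rewrite /labels /label (map_comp (fun x : 'I_n.+1 => (val x).+1) s).
apply: perm_map; apply: uniq_perm; rewrite ?enum_uniq //.
  by rewrite map_inj_uniq ?enum_uniq //; exact: perm_inj.
move=> x; rewrite mem_enum; apply/mapP; exists (s^-1 x)%g; by rewrite ?mem_enum ?permKV.
Qed.

Lemma vweight_hub : vweight s ord0 = sumn labels - label s ord0.
Proof.
rewrite -sum_labels (bigD1 ord0) //= addKn; apply: eq_bigl => y.
by rewrite /fan_adj /=; case: y => [[|k] ?].
Qed.

Lemma vweight_path (x : 'I_n.+1) : val x != 0 ->
  vweight s x = label s ord0 + (if 1 < x then label s (inord x.-1) else 0)
                + (if x < n then label s (inord x.+1) else 0).
Proof.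
move=> x0; pose g k := label s (inord k).
have gE y : label s y = g (val y) by rewrite /g inord_val.
rewrite /vweight (eq_bigr _ (fun y _ => gE y)) (bigID (fun y : 'I_n.+1 => val y == 0)) /=.
rewrite [X in _ + X](bigID (fun y : 'I_n.+1 => val y == x.+1)) /= addnA.
have -> : \sum_(y | fan_adj n x y && (val y == 0)) g y = \sum_(y < n.+1 | y == 0 :> nat) g y.
  by apply: eq_bigl => y; rewrite /fan_adj (negbTE x0) /=; apply/idP/idP; lia.
have -> : \sum_(y | fan_adj n x y && (val y != 0) && (val y == x.+1)) g y
          = \sum_(y < n.+1 | y == x.+1 :> nat) g y.
  by apply: eq_bigl => y; rewrite /fan_adj (negbTE x0) /=; apply/idP/idP; lia.
have -> : \sum_(y | fan_adj n x y && (val y != 0) && (val y != x.+1)) g y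
          = \sum_(y < n.+1 | (1 < x) && (y == x.-1 :> nat)) g y.
  by apply: eq_bigl => y; rewrite /fan_adj (negbTE x0) /=; apply/idP/idP; lia.
rewrite !big_ord1_eq (big_ord1_cond_eq _ g (fun=> 1 < x)) ltn0Sn ltnS (gE ord0) /g /=.
have := ltn_ord x; case: ifP; case: ifP; case: ifP => //=; lia.
Qed.

Lemma weightsE : [seq vweight s x | x : 'I_n.+1] = fan_weights n labels.
Proof.
rewrite /fan_weights -val_enum_ord -map_comp; apply: eq_map => x /=; rewrite /fan_weight.
have hx := ltn_ord x; rewrite nth_labels //.
have -> : (inord 0 : 'I_n.+1) = ord0 by apply: val_inj; rewrite /= inordK.
case: eqP => [x0|/eqP x0]; first by rewrite (_ : x = ord0) ?vweight_hub //; apply: val_inj.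
rewrite vweight_path //; congr (_ + _ + _); case: ifP => h //; rewrite nth_labels //; lia.
Qed.

Lemma distance_antimagicE :
  (exists (a : int) (d : nat), distance_antimagic s a d)
  <-> (exists w d, perm_eq (fan_weights n labels) (ap w d n.+1)).
Proof.
rewrite /distance_antimagic -weightsE.
have mapE : [seq Posz (vweight s x) | x : 'I_n.+1] = [seq Posz w | w <- [seq vweight s x | x : 'I_n.+1]].
  by rewrite -map_comp.
rewrite mapE; split => [[a [d h]]|[w [d h]]].
- by have [w hw] := (int_ap_nat _ d n).1 (ex_intro _ a h); exists w, d.
- by have [a ha] := (int_ap_nat _ d n).2 (ex_intro _ w h); exists a, d.
Qed.

End LabeledFan.

(* Gauss' sum 1 + 2 + ... + N, doubled to stay in nat. *)
Lemma sumn_iota1 N : (sumn (iota 1 N)).*2 = N * N.+1.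
Proof.
elim: N => [//|N IH]; rewrite -(addn1 N) iotaD sumn_cat /= doubleD add1n IH; lia.
Qed.

Section WeightBounds.

Variables (n : nat) (ls : seq nat).
Hypothesis ls_perm : perm_eq ls (iota 1 n.+1).

Lemma label_bounds k : k <= n -> 0 < nth 0 ls k <= n.+1.
Proof.
move=> hk; have : nth 0 ls k \in iota 1 n.+1.
  by rewrite -(perm_mem ls_perm) mem_nth // (perm_size ls_perm) size_iota.
by rewrite mem_iota; lia.
Qed.

(* A path vertex sees at most three labels, each at most n + 1. *)
Lemma path_weight_bounds k : 0 < k <= n -> 0 < fan_weight n ls k <= 3 * n.+1.
Proof.
move=> hk; rewrite /fan_weight ifF; last by lia.
have := label_bounds (leq0n n).
case: ifP => h1; [have := label_bounds (k := k.-1) ltac:(lia)|];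
  (case: ifP => h2; [have := label_bounds (k := k.+1) ltac:(lia)|]); lia.
Qed.

(* The hub sees all labels but its own: at least 1 + ... + n of them. *)
Lemma hub_weight_lb : n * n.+1 <= (fan_weight n ls 0).*2.
Proof.
rewrite /fan_weight eqxx (perm_sumn ls_perm).
have := sumn_iota1 n.+1; have := label_bounds (leq0n n); nia.
Qed.

Lemma mem_fan_weights x : (x \in fan_weights n ls) = has (fun k => x == fan_weight n ls k) (iota 0 n.+1).
Proof. by apply/mapP/hasP => [[k hk ->]|[k hk /eqP ->]]; exists k. Qed.

Lemma large_fans_not_ap w d : 7 <= n -> ~ perm_eq (fan_weights n ls) (ap w d n.+1).
Proof.
move=> n7 hW; set c := fan_weight n ls 0.
have hub_big : 3 * n.+1 < c by have := hub_weight_lb; rewrite -/c; nia.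
have memW x : x \in fan_weights n ls -> x = c \/ 0 < x <= 3 * n.+1.
  rewrite mem_fan_weights => /hasP [[|k]]; rewrite mem_iota => hk /eqP ->; first by left.
  by right; apply: path_weight_bounds; lia.
have path1 := path_weight_bounds (k := 1) ltac:(lia).
have weight1 : fan_weight n ls 1 \in fan_weights n ls by apply: map_f; rewrite mem_iota; lia.
have cW : c \in fan_weights n ls by apply: map_f; rewrite mem_iota.
have W_pos : 0 \notin fan_weights n ls by apply/negP => /memW; lia.
have others_small x : x \in fan_weights n ls -> x != c -> x <= 3 * n.+1.
  by move=> /memW [->|]; [rewrite eqxx | lia].
have other : exists2 x, x \in fan_weights n ls & x != c.
  by exists (fan_weight n ls 1) => //; apply/eqP; lia.
have := ap_outlier_gap hW ltac:(lia) W_pos cW hub_big others_small other.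
have := hub_weight_lb; rewrite -/c; nia.
Qed.

End WeightBounds.

Lemma small_fans_not_ap :
  all (fun n => all (fun ls => ~~ is_ap (fan_weights n ls)) (permutations (iota 1 n.+1)))
      [:: 3; 5; 6].
Proof. by vm_compute. Qed.

(* F_2 with labels f(x_0), f(x_1), f(x_2) = 1, 2, 3 has weights 5, 4, 3. *)
Lemma fan2_antimagic : exists w d, perm_eq (fan_weights 2 (labels (1%g : {perm 'I_3}))) (ap w d 3).
Proof. by exists 3, 1; rewrite labelsE /label /= !perm1 !inordK. Qed.

(* F_4 with labels 5, 1, 2, 3, 4 has weights 10, 7, 9, 11, 8. *)
Lemma fan4_antimagic :
  exists w d, perm_eq (fan_weights 4 (labels (perm (@ord_pred_inj 5)))) (ap w d 5).
Proof. by exists 7, 1; rewrite labelsE /label /= !permE /= !inordK. Qed.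

Theorem mainTheorem13 (n : nat) (hn : 2 <= n) :
  (exists (s : {perm 'I_n.+1}) (a : int) (d : nat), distance_antimagic s a d)
  <-> (n = 2 \/ n = 4).
Proof.
split=> [[s /distance_antimagicE [w [d hW]]]|[->|->]].
- have hls := labels_perm s.
  have [n7|n_lt7] := leqP 7 n; first by case: (large_fans_not_ap hls n7 hW).
  have hap : is_ap (fan_weights n (labels s)).
    by apply: is_ap_of; rewrite size_map size_iota //; lia.
  suff : n \notin [:: 3; 5; 6] by rewrite !inE; lia.
  apply/negP => n356; have := allP (allP small_fans_not_ap n n356) (labels s).
  by rewrite mem_permutations hls hap => /(_ isT).
- by exists 1%g; apply/distance_antimagicE; exact: fan2_antimagic.
- by exists (perm (@ord_pred_inj 5)); apply/distance_antimagicE; exact: fan4_antimagic.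
Qed.
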